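(* Let $X$ be a finite dimensional Banach space with $n(X)>0$. Then $X$ has the $\mathbf{L}_{p,p}$-nu.
   Context: Let $X$ be a Banach space over $\mathbb{K}\in\{\mathbb{R},\mathbb{C}\}$, $\mathcal{L}(X)$ the bounded linear operators on $X$. $\Pi(X)=\{(x,x^* )\in S_X\times S_{X^*}: x^*(x)=1\}$; $v(T)=\sup\{|x^*(Tx)|:(x,x^* )\in\Pi(X)\}$; $n(X)=\inf\{v(T): T\in\mathcal{L}(X),\ \|T\|=1\}$. $X$ has the $\mathbf{L}_{p,p}$-nu if for every $\varepsilon>0$ and $(x,x^* )\in\Pi(X)$ there is $\eta(\varepsilon,(x,x^* ))>0$ such that whenever $T\in\mathcal{L}(X)$ with $v(T)=1$ satisfies $|x^*(Tx)|>1-\eta(\varepsilon,(x,x^* ))$, there is $S\in\mathcal{L}(X)$ with $v(S)=1$, $|x^*(Sx)|=1$ and $\|S-T\|<\varepsilon$. *)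

From HB Require Import structures.
From mathcomp Require Import all_boot all_order all_algebra.
From mathcomp Require Import all_classical all_reals all_analysis.
From mathcomp Require Import complex.
Set Implicit Arguments. Unset Strict Implicit. Unset Printing Implicit Defensive.
Import Order.TTheory GRing.Theory Num.Theory.
Import numFieldNormedType.Exports.
Local Open Scope classical_set_scope.
Local Open Scope ring_scope.

(* In the
   theorem K is instantiated to R and to R[i] = complex R for R : realType. *)

Definition is_sup (K : numFieldType) (S : set K) (s : K) : Prop :=
  (forall y, S y -> y <= s) /\ (forall e, 0 < e -> exists2 y, S y & s - e < y).

Definition bounded_linear (K : numFieldType) (V W : normedModType K)
  (T : V -> W) : Prop :=
  (forall (a : K) (x y : V), T (a *: x + y) = a *: T x + T y) /\
  (exists c : K, forall x, `|T x| <= c * `|x|).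

Definition opnorm_is (K : numFieldType) (V W : normedModType K)
  (T : V -> W) (s : K) : Prop :=
  is_sup [set `|T x| | x in [set x : V | `|x| <= 1]] s.

(* Pi(X) = {(x, x^* ) in S_X x S_{X^*} : x^*(x) = 1};
   elements of X^* are bounded linear functionals V -> K (= K^o). *)
Definition Pi (K : numFieldType) (V : normedModType K) : set (V * (V -> K^o)) :=
  [set p : V * (V -> K^o) | `|p.1| = 1 /\ bounded_linear p.2 /\
     opnorm_is p.2 (1 : K) /\ (p.2 p.1 : K) = 1].

Definition numrad_is (K : numFieldType) (V : normedModType K)
  (T : V -> V) (s : K) : Prop :=
  is_sup [set `|p.2 (T p.1)| | p in @Pi K V] s.

(* n(X) > 0, i.e. inf { v(T) : T in L(X), ||T|| = 1 } > 0 (with inf of the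
   empty set = +oo): some c > 0 is a lower bound of that set. *)
Definition numindex_pos (K : numFieldType) (V : normedModType K) : Prop :=
  exists2 c : K, 0 < c &
    forall (T : V -> V) (s : K),
      bounded_linear T -> opnorm_is T 1 -> numrad_is T s -> c <= s.

Definition Lpp_nu (K : numFieldType) (V : normedModType K) : Prop :=
  forall (eps : K), 0 < eps ->
  forall p, @Pi K V p ->
  exists2 eta : K, 0 < eta &
    forall T : V -> V, bounded_linear T -> numrad_is T 1 ->
      1 - eta < `|p.2 (T p.1)| ->
      exists S : V -> V, [/\ bounded_linear S, numrad_is S 1,
        `|p.2 (S p.1)| = 1 &
        exists2 s : K, opnorm_is (fun x => S x - T x) s & s < eps].

Definition finite_dim (K : numFieldType) (V : normedModType K) : Prop :=
  exists (n : nat) (e : 'I_n -> V),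
    forall x : V, exists c : 'I_n -> K, x = \sum_(i < n) c i *: e i.

From HB Require Import structures.
From mathcomp Require Import all_boot all_order all_algebra.
From mathcomp Require Import all_classical all_reals all_analysis.
From mathcomp Require Import complex.
From mathcomp Require Import ring.
Import Order.TTheory GRing.Theory Num.Theory.
Import numFieldNormedType.Exports.
Local Open Scope ring_scope.
Set Implicit Arguments. Unset Strict Implicit. Unset Printing Implicit Defensive.

(* Fix eps > 0 and (x, x^* ) in Pi(X) and suppose that no eta works.  Then for
   every k there is an operator T_k with v(T_k) = 1 and
   |x^*(T_k x)| > 1 - 1/(k+1) lying at distance >= eps from every S with
   v(S) = 1 = |x^*(S x)|.  Since n(X) > 0 we have ||T|| <= v(T) / n(X), so the
   T_k are uniformly bounded.  Writing operators as real matrices in a fixed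
   real spanning family of X, the T_k live in a compact box, hence have a
   cluster point S in operator norm.  S is linear, v(S) <= 1 and
   |x^*(S x)| = 1, so v(S) = 1, and S is eps-close to some T_k: contradiction.

   Both scalar fields are handled at once: K is any numFieldType receiving R
   through an order embedding io, with a real-valued modulus nrm. *)

Lemma subrDD (V : zmodType) (s u v w z : V) :
  s - (u + v) = (s - (w + z)) - ((u - w) + (v - z)).
Proof.
have -> : (u - w) + (v - z) = (u + v) - (w + z) by rewrite opprD addrACA.
by rewrite opprB addrA subrK.
Qed.

Lemma le_of_le_add_small (R : realFieldType) (r a C : R) : 0 <= C ->
  (forall d, 0 < d -> r <= a + d * C) -> r <= a.
Proof.
move=> C0 h; apply/ler_addgt0Pr => e e0.
apply: le_trans (h (e / (C + 1)) _) _; first by rewrite divr_gt0 // ltr_wpDl.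
rewrite lerD2l -ler_pdivlMl ?divr_gt0 ?ltr_wpDl // invf_div mulrC.
by rewrite mulrCA mulfV ?gt_eqF // mulr1 lerDl ler01.
Qed.

Lemma invSn_le (R : archiRealFieldType) (d : R) k : 0 < d ->
  (Num.truncn d^-1 <= k)%N -> k.+1%:R^-1 <= d.
Proof.
move=> d0; rewrite truncn_le_nat => hk.
by rewrite -[d]invrK ltW // ltf_pV2 ?posrE ?invr_gt0 ?ltr0Sn.
Qed.

Lemma is_sup_scale (K : numFieldType) (S S' : set K) s l : 0 < l ->
  (forall y, S' y <-> exists2 z, S z & y = l * z) -> is_sup S s -> is_sup S' (l * s).
Proof.
move=> l0 hS [ub ap]; split.
  by move=> y /hS [z Sz ->]; rewrite ler_pM2l // ub.
move=> e e0; have [z Sz hz] := ap (e / l) (divr_gt0 e0 l0).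
exists (l * z); first by apply/hS; exists z.
by move: hz; rewrite -(ltr_pM2l l0) mulrBr mulrCA mulfV ?gt_eqF // mulr1.
Qed.

Lemma rV_entry_le (R : realType) m (v : 'rV[R]_m) i : `|v ord0 i| <= `|v|.
Proof.
rewrite [leRHS]/Num.norm /= mx_normrE; apply/bigmax_geP; right => /=.
by exists (ord0, i).
Qed.

Lemma lipschitz_continuous (R : realType) m (h : 'rV[R]_m -> R) (C : R) : 0 <= C ->
  (forall u v, `|h u - h v| <= C * `|u - v|) -> continuous h.
Proof.
move=> C0 hl x A /nbhs_ballP[e e0 eA]; apply/nbhs_ballP.
exists (e / (C + 1)); first by rewrite /= divr_gt0 // ltr_wpDl.
move=> y; rewrite -ball_normE /= => xy; apply: eA; rewrite -ball_normE /=.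
apply: le_lt_trans (hl x y) _.
apply: le_lt_trans (_ : C * `|x - y| <= (C + 1) * `|x - y|) _.
  by rewrite ler_wpM2r // lerDl.
by rewrite mulrC -ltr_pdivlMr // ltr_wpDl.
Qed.

Lemma compact_seq_cluster (R : realType) n (A : set 'rV[R]_n) (w : nat -> 'rV[R]_n) :
  compact A -> (forall k, A (w k)) ->
  exists winf, forall d, 0 < d -> forall n0, exists2 k, (n0 <= k)%N & `|w k - winf| < d.
Proof.
move=> A_compact w_A.
have w_ev : (w @ \oo)%classic A.
  exact: (@filterE nat eventually _ (w @^-1` A)%classic w_A).
have [winf [_ w_clust]] := A_compact (w @ \oo)%classic _ w_ev.
exists winf => d d0 n0.
have tail : (w @ \oo)%classic [set w k | k in [set k | (n0 <= k)%N]]%classic.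
  by exists n0 => // k /= hk; exists k.
have [_ [[k kn0 <-] near_k]] := w_clust _ _ tail (nbhsx_ballx _ _ d0).
by exists k => //; move: near_k; rewrite -ball_normE /= distrC.
Qed.

(* A continuous, nonnegative, absolutely homogeneous function on R^(m+1)
   vanishing only at 0 dominates a positive multiple of the norm: it attains
   a positive minimum on the compact unit sphere. *)
Lemma homogeneous_dominates_norm (R : realType) m (h : 'rV[R]_m.+1 -> R) :
  continuous h -> (forall v, 0 <= h v) -> (forall v, h v = 0 -> v = 0) ->
  (forall a v, h (a *: v) = `|a| * h v) ->
  exists2 a : R, 0 < a & forall v, a * `|v| <= h v.
Proof.
move=> hc h_ge0 h_eq0 hZ.
pose S := [set v : 'rV[R]_m.+1 | `|v| = 1]%classic.
have S_compact : compact S.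
  apply: bounded_closed_compact.
    by exists 1; split => // x x1 v /= ->; exact: ltW.
  apply: (@preimage_closed _ _ (fun v : 'rV[R]_m.+1 => `|v|) [set 1]%classic).
    by move=> v _; exact: norm_continuous.
  exact: closed_eq.
have normalize v : v != 0 -> S (`|v|^-1 *: v).
  by move=> v0; rewrite /S /= normrZ ger0_norm ?invr_ge0 ?normr_ge0 // mulVf ?normr_eq0.
have S_ne : (S !=set0)%classic.
  pose u : 'rV[R]_m.+1 := const_mx 1.
  exists (`|u|^-1 *: u); apply: normalize.
  by apply/eqP => /rowP/(_ ord0); rewrite !mxE => /eqP; rewrite oner_eq0.
have [c /set_mem Sc c_min] :=
  compact_EVT_min S_ne S_compact (continuous_subspaceT hc).
have hc_gt0 : 0 < h c.
  rewrite lt_def h_ge0 andbT; apply/eqP => /h_eq0 c0.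
  by move: Sc; rewrite /S /= c0 normr0 => /eqP; rewrite eq_sym oner_eq0.
exists (h c) => // v; have [->|v0] := eqVneq v 0.
  by rewrite normr0 mulr0 h_ge0.
have := c_min _ (mem_set (normalize v v0)).
rewrite hZ ger0_norm ?invr_ge0 ?normr_ge0 // ler_pdivlMl ?normr_gt0 //.
by rewrite mulrC.
Qed.

Section RealScalars.
Variables (R : realType) (K : numFieldType) (io : {rmorphism R -> K}) (nrm : K -> R).
Hypothesis io_le : forall a b, (io a <= io b) = (a <= b).
Hypothesis io_nrm : forall k, io (nrm k) = `|k|.

Lemma io_lt a b : (io a < io b) = (a < b).
Proof. by rewrite !lt_def io_le (inj_eq (fmorph_inj io)). Qed.

Lemma io_gt0 a : (0 < io a) = (0 < a).
Proof. by rewrite -(rmorph0 io) io_lt. Qed.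

Lemma nrm_ge0 k : 0 <= nrm k.
Proof. by rewrite -io_le rmorph0 io_nrm. Qed.

Lemma nrm_io r : nrm (io r) = `|r|.
Proof.
apply: (fmorph_inj io); rewrite io_nrm; have [r0|r0] := leP 0 r.
  by rewrite (ger0_norm r0) ger0_norm // -(rmorph0 io) io_le.
by rewrite (ltr0_norm r0) ltr0_norm ?rmorphN // -(rmorph0 io) io_lt.
Qed.

Lemma nrm_eq0 k : (nrm k == 0) = (k == 0).
Proof.
by rewrite -[k == 0]normr_eq0 -[`|k|]io_nrm -(rmorph0 io) (inj_eq (fmorph_inj io)).
Qed.

Lemma nrm1 : nrm 1 = 1.
Proof. by rewrite -(rmorph1 io) nrm_io normr1. Qed.

Lemma io_nrm_pos k : 0 < k -> k = io (nrm k).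
Proof. by move=> k0; rewrite io_nrm gtr0_norm. Qed.

Lemma nrm_gt0 k : 0 < k -> 0 < nrm k.
Proof. by move=> k0; rewrite -io_gt0 -io_nrm_pos. Qed.

Section RealNorm.
Variable V : normedModType K.

Definition rnorm (x : V) : R := nrm `|x|.

Lemma normE x : `|x| = io (rnorm x).
Proof. by rewrite /rnorm io_nrm normr_id. Qed.

Lemma rnorm_ge0 x : 0 <= rnorm x. Proof. exact: nrm_ge0. Qed.

Lemma rnorm_eq0 x : (rnorm x == 0) = (x == 0).
Proof. by rewrite /rnorm nrm_eq0 normr_eq0. Qed.

Lemma rnorm0 : rnorm 0 = 0. Proof. by apply/eqP; rewrite rnorm_eq0. Qed.

Lemma rnormD x y : rnorm (x + y) <= rnorm x + rnorm y.
Proof. by rewrite -io_le rmorphD -!normE ler_normD. Qed.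

Lemma rnormZ a x : rnorm (a *: x) = nrm a * rnorm x.
Proof. by apply: (fmorph_inj io); rewrite /rnorm rmorphM !io_nrm !normr_id normrZ. Qed.

Lemma rnormN x : rnorm (- x) = rnorm x. Proof. by rewrite /rnorm normrN. Qed.

Lemma rnormB x y : rnorm (x - y) <= rnorm x + rnorm y.
Proof. by rewrite -(rnormN y) rnormD. Qed.

Lemma rnorm_lev x y : rnorm x - rnorm y <= rnorm (x - y).
Proof. by rewrite lerBlDr; apply: le_trans (rnormD _ _); rewrite subrK. Qed.

Lemma rnorm_sum (I : Type) (s : seq I) (F : I -> V) :
  rnorm (\sum_(i <- s) F i) <= \sum_(i <- s) rnorm (F i).
Proof.
elim: s => [|a s IH]; first by rewrite !big_nil rnorm0.
by rewrite !big_cons; apply: le_trans (rnormD _ _) _; exact: lerD.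
Qed.

Definition rcomb m (f : 'I_m -> V) (c : 'I_m -> R) : V :=
  \sum_(i < m) io (c i) *: f i.

Lemma rnorm_rcomb m (f : 'I_m -> V) c :
  rnorm (rcomb f c) <= \sum_(i < m) `|c i| * rnorm (f i).
Proof.
apply: le_trans (rnorm_sum _ _) _; apply: ler_sum => i _.
by rewrite rnormZ nrm_io.
Qed.

Lemma rcombB m (f : 'I_m -> V) c d :
  rcomb f (fun i => c i - d i) = rcomb f c - rcomb f d.
Proof.
by rewrite /rcomb -sumrB; apply: eq_bigr => i _; rewrite rmorphB scalerBl.
Qed.

Lemma rcombZ m (f : 'I_m -> V) a c : rcomb f (fun i => a * c i) = io a *: rcomb f c.
Proof.
by rewrite /rcomb scaler_sumr; apply: eq_bigr => i _; rewrite rmorphM scalerA.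
Qed.

End RealNorm.

Section Coordinates.
Variable V : normedModType K.

(* For a real-linearly independent family, the coefficients of a combination
   are controlled by its norm (equivalence of norms on R^(m+1)). *)
Lemma independent_coord_bound m (f : 'I_m.+1 -> V) :
  (forall c, rcomb f c = 0 -> forall i, c i = 0) ->
  exists2 b : R, 0 < b & forall c i, `|c i| <= b * rnorm (rcomb f c).
Proof.
move=> indep.
pose h (v : 'rV[R]_m.+1) := rnorm (rcomb f (fun i => v ord0 i)).
pose C := \sum_(i < m.+1) rnorm (f i).
have C_ge0 : 0 <= C by apply: sumr_ge0 => i _; exact: rnorm_ge0.
have h_lip u v : `|h u - h v| <= C * `|u - v|.
  have h_sub u' v' : h u' - h v' <= C * `|u' - v'|.
    apply: le_trans (rnorm_lev _ _) _; rewrite -rcombB.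
    apply: le_trans (rnorm_rcomb _ _) _; rewrite /C mulr_suml.
    apply: ler_sum => i _; rewrite mulrC; apply: ler_wpM2l; first exact: rnorm_ge0.
    by have := rV_entry_le (u' - v') i; rewrite !mxE.
  rewrite ler_norml h_sub andbT lerNl opprB.
  by apply: le_trans (h_sub v u) _; rewrite distrC.
have h_eq0 v : h v = 0 -> v = 0.
  move/eqP; rewrite rnorm_eq0 => /eqP/indep v0.
  by apply/rowP => i; rewrite mxE v0.
have hZ a v : h (a *: v) = `|a| * h v.
  rewrite /h (_ : (fun i => _) = (fun i => a * v ord0 i)); last first.
    by apply/funext => j; rewrite mxE.
  by rewrite rcombZ rnormZ nrm_io.
have [a a0 ha] := homogeneous_dominates_norm (lipschitz_continuous C_ge0 h_lip)
  (fun v => rnorm_ge0 _) h_eq0 hZ.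
exists a^-1; first by rewrite invr_gt0.
move=> c i; pose u : 'rV[R]_m.+1 := \row_j c j.
have -> : rcomb f c = rcomb f (fun j => u ord0 j).
  by congr rcomb; apply/funext => j; rewrite mxE.
apply: le_trans (_ : `|c i| <= `|u|) _; first by have := rV_entry_le u i; rewrite mxE.
by rewrite ler_pdivlMl //; exact: ha.
Qed.

Lemma rcomb_drop m (f : 'I_m.+1 -> V) c0 j : c0 j != 0 -> rcomb f c0 = 0 ->
  forall d, exists d', rcomb f d = rcomb (fun i => f (lift j i)) d'.
Proof.
move=> cj Lc0 d; exists (fun i => d (lift j i) - d j * (c0 (lift j i) / c0 j)).
have ioj : io (c0 j) != 0 by rewrite fmorph_eq0.
rewrite /rcomb in Lc0 *; rewrite (bigD1_ord j) //= in Lc0.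
have fj : f j = - \sum_(i < m) io (c0 (lift j i) / c0 j) *: f (lift j i).
  have := congr1 (fun v => (io (c0 j))^-1 *: v) Lc0.
  rewrite scalerDr scalerA mulVf // scale1r scaler0 => /eqP.
  rewrite addr_eq0 => /eqP ->; congr (- _); rewrite scaler_sumr.
  by apply: eq_bigr => i _; rewrite scalerA rmorphM fmorphV mulrC.
rewrite (bigD1_ord j) //= fj scalerN scaler_sumr addrC -sumrB; apply: eq_bigr => i _ /=.
by rewrite rmorphB scalerBl scalerA -rmorphM.
Qed.

(* Any real combination can be rewritten with coefficients bounded by a fixed
   multiple of its norm; induction on the number of vectors, dropping
   dependent ones. *)
Lemma rcomb_coord_bound m (f : 'I_m -> V) : exists2 b : R, 0 < b &
  forall d, exists c, rcomb f c = rcomb f d /\ forall i, `|c i| <= b * rnorm (rcomb f d).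
Proof.
elim: m f => [|m IH] f; first by exists 1 => // d; exists d; split => // -[].
case: (pselect (exists c0 : 'I_m.+1 -> R, (exists j, c0 j != 0) /\ rcomb f c0 = 0))
  => [[c0 [[j cj] Lc0]]|nodep]; last first.
  have indep c : rcomb f c = 0 -> forall i, c i = 0.
    move=> Lc i; apply/eqP/negPn/negP => ci; apply: nodep.
    by exists c; split => //; exists i.
  have [b b0 hb] := independent_coord_bound indep.
  by exists b => // d; exists d; split.
have [b b0 hb] := IH (fun i => f (lift j i)).
exists b => // d; have [d' ->] := rcomb_drop cj Lc0 d.
have [c' [Lc' hc']] := hb d'.
exists (fun i => if unlift j i is Some k then c' k else 0); split.
  rewrite -Lc' /rcomb (bigD1_ord j) //= unlift_none rmorph0 scale0r add0r.
  by apply: eq_bigr => i _; rewrite liftK.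
move=> i; case: (unlift j i) => [k|]; first exact: hc'.
by rewrite normr0 mulr_ge0 ?rnorm_ge0 // ltW.
Qed.

Lemma bounded_coordinates m (f : 'I_m -> V) : (forall x, exists c, x = rcomb f c) ->
  exists b, exists2 crd : V -> 'I_m -> R, 0 < b /\ (forall x, x = rcomb f (crd x)) &
    forall x i, `|crd x i| <= b * rnorm x.
Proof.
move=> span; have [b b0 hb] := rcomb_coord_bound f.
have /choice[crd hcrd] : forall x, exists c, x = rcomb f c /\
    forall i, `|c i| <= b * rnorm x.
  move=> x; have [d ->] := span x; have [c [Lc hc]] := hb d.
  by exists c; rewrite Lc; split.
exists b, crd; first by split=> // x; case: (hcrd x).
by move=> x; case: (hcrd x).
Qed.

End Coordinates.

Section Operators.
Variables V W : normedModType K.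

Definition linear_fun (T : V -> W) : Prop :=
  forall (a : K) x y, T (a *: x + y) = a *: T x + T y.

Lemma linear_fun0 T : linear_fun T -> T 0 = 0.
Proof.
move=> hT; have := hT 1 0 0; rewrite !scale1r addr0 => e.
by have := congr1 (fun v => v - T 0) e; rewrite subrr addrK.
Qed.

Lemma linear_funZ T a x : linear_fun T -> T (a *: x) = a *: T x.
Proof. by move=> hT; have := hT a x 0; rewrite addr0 linear_fun0 // addr0. Qed.

Lemma linear_funB T x y : linear_fun T -> T (x - y) = T x - T y.
Proof.
by move=> hT; have := hT (-1) y x; rewrite !scaleN1r addrC => ->; rewrite addrC.
Qed.

Lemma linear_fun_rcomb T m (f : 'I_m -> V) c : linear_fun T ->
  T (rcomb f c) = \sum_(j < m) io (c j) *: T (f j).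
Proof.
move=> hT; rewrite /rcomb; elim/big_rec2: _ => [|i y1 y2 _ <-].
  exact: linear_fun0.
by rewrite hT.
Qed.

Lemma opnorm_le (T : V -> W) s : linear_fun T -> opnorm_is T s ->
  forall x, `|T x| <= s * `|x|.
Proof.
move=> hT [ub _] x; have [->|x0] := eqVneq x 0.
  by rewrite linear_fun0 // !normr0 mulr0.
have x_gt0 : 0 < rnorm x by rewrite lt_def rnorm_eq0 x0 rnorm_ge0.
have iox_gt0 : 0 < io (rnorm x) by rewrite io_gt0.
have xV_ge0 : 0 <= (rnorm x)^-1 by rewrite invr_ge0 ltW.
have : `|T (io (rnorm x)^-1 *: x)| <= s.
  apply: ub; exists (io (rnorm x)^-1 *: x) => //=.
  by rewrite normE rnormZ nrm_io (ger0_norm xV_ge0) mulVf ?gt_eqF // rmorph1.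
rewrite linear_funZ // normrZ fmorphV ger0_norm; last by rewrite invr_ge0 ltW.
by rewrite mulrC -ler_pdivlMr ?invr_gt0 // invrK -normE.
Qed.

Lemma opnorm_exists (T : V -> W) B : 0 <= B ->
  (forall x, rnorm (T x) <= B * rnorm x) -> exists2 s, s <= B & opnorm_is T (io s).
Proof.
move=> B0 hB.
pose E := [set r : R | exists2 x : V, rnorm x <= 1 & r = rnorm (T x)]%classic.
have E0 : (E !=set0)%classic by exists (rnorm (T 0)); exists 0 => //; rewrite rnorm0 ler01.
have Eub : ubound E B.
  by move=> _ [x x1 ->]; apply: le_trans (hB x) _; rewrite ler_piMr.
have hs : has_sup E by split => //; exists B.
exists (sup E); first exact: ge_sup.
split.
  move=> _ [x x1 <-]; rewrite normE io_le; apply: sup_upper_bound => //.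
  by exists x => //; rewrite -io_le rmorph1 -normE.
move=> e e0; have [r [x x1 ->] hr] := sup_adherent (nrm_gt0 e0) hs.
exists `|T x|; first by exists x => //; rewrite /= normE -(rmorph1 io) io_le.
by rewrite normE (io_nrm_pos e0) -rmorphB io_lt.
Qed.

Lemma opnorm_scale (T : V -> W) s l : 0 < l -> opnorm_is T s ->
  opnorm_is (fun x => io l *: T x) (io l * s).
Proof.
move=> l0 oT; apply: is_sup_scale oT; first by rewrite io_gt0.
move=> y; have nl x : `|io l *: T x| = io l * `|T x|.
  by rewrite normrZ gtr0_norm ?io_gt0.
split; first by move=> [u hu <-]; exists `|T u|; [exists u | rewrite /= nl].
by move=> [_ [u hu <-] ->]; exists u => //; rewrite /= nl.
Qed.

End Operators.

Section NumericalRadius.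
Variable V : normedModType K.

Lemma Pi_props (q : V * (V -> K^o)) : Pi q ->
  [/\ rnorm q.1 = 1, linear_fun q.2 & forall z, rnorm (q.2 z) <= rnorm z].
Proof.
move=> [q1 [[lq _] [oq _]]]; split => //; first by rewrite /rnorm q1 nrm1.
by move=> z; have := opnorm_le lq oq z; rewrite mul1r !normE io_le.
Qed.

Lemma numrad_scale (T : V -> V) v l : 0 < l -> numrad_is T v ->
  numrad_is (fun x => io l *: T x) (io l * v).
Proof.
move=> l0 nT; apply: is_sup_scale nT; first by rewrite io_gt0.
move=> y; have nl q : Pi q -> `|q.2 (io l *: T q.1)| = io l * `|q.2 (T q.1)|.
  by case/Pi_props => _ lq _; rewrite (linear_funZ _ _ lq) normrZ gtr0_norm ?io_gt0.
split; first by move=> [q hq <-]; exists `|q.2 (T q.1)|; [exists q | rewrite /= nl].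
by move=> [_ [q hq <-] ->]; exists q => //; rewrite /= nl.
Qed.

Lemma numrad1_opnorm_pos (T : V -> V) s : numrad_is T 1 ->
  (forall x, rnorm (T x) <= s * rnorm x) -> 0 < s.
Proof.
move=> [_ ap] Tle; have [y [q hq <-] hy] := ap 1 ltr01.
have [q1 _ qb] := Pi_props hq.
move: hy; rewrite subrr normE io_gt0 => hy.
by apply: lt_le_trans hy (le_trans (qb _) _); rewrite -[s]mulr1 -q1 Tle.
Qed.

Lemma Pi_approx (S T : V -> V) d q : Pi q ->
  (forall y, rnorm (S y - T y) <= d * rnorm y) ->
  rnorm (q.2 (S q.1)) <= rnorm (q.2 (T q.1)) + d.
Proof.
case/Pi_props => q1 lq qb hST.
have -> : q.2 (S q.1) = q.2 (T q.1) + q.2 (S q.1 - T q.1).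
  by rewrite (linear_funB _ _ lq) addrC subrK.
apply: le_trans (rnormD _ _) _; rewrite lerD2l.
by apply: le_trans (qb _) _; apply: le_trans (hST _) _; rewrite q1 mulr1.
Qed.

Definition op_cluster (T : nat -> V -> V) (S : V -> V) : Prop :=
  forall d, 0 < d -> forall n0, exists2 k, (n0 <= k)%N &
    forall y, rnorm (S y - T k y) <= d * rnorm y.

Lemma op_cluster_linear (T : nat -> V -> V) S :
  (forall k, linear_fun (T k)) -> op_cluster T S -> linear_fun S.
Proof.
move=> lT cS a x y; apply/eqP; rewrite -subr_eq0 -rnorm_eq0 eq_le rnorm_ge0 andbT.
apply: (@le_of_le_add_small _ _ _ (rnorm (a *: x + y) + nrm a * rnorm x + rnorm y)).
  by rewrite !addr_ge0 ?mulr_ge0 ?rnorm_ge0 ?nrm_ge0.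
move=> d d0; have [k _ hk] := cS d d0 0%N.
rewrite (subrDD _ _ _ (a *: T k x) (T k y)) -(lT k) -scalerBr add0r.
apply: le_trans (rnormB _ _) _; apply: le_trans (lerD (hk _) (rnormD _ _)) _.
rewrite rnormZ; apply: le_trans
  (lerD (lexx _) (lerD (ler_wpM2l (nrm_ge0 a) (hk x)) (hk y))) _.
by rewrite le_eqVlt; apply/orP; left; apply/eqP; ring.
Qed.

Lemma op_cluster_numrad1 (T : nat -> V -> V) S p : Pi p ->
  (forall k, numrad_is (T k) 1) ->
  (forall k, 1 - io (k.+1%:R^-1) < `|p.2 (T k p.1)|) ->
  op_cluster T S -> numrad_is S 1 /\ `|p.2 (S p.1)| = 1.
Proof.
move=> pP nT pT cS.
have S_le1 q : Pi q -> rnorm (q.2 (S q.1)) <= 1.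
  move=> hq; apply: (@le_of_le_add_small _ _ _ 1); first exact: ler01.
  move=> d d0.
  have [k _ hk] := cS d d0 0%N; rewrite mulr1.
  apply: le_trans (Pi_approx hq hk) _; rewrite lerD2r.
  by case: (nT k) => ub _; rewrite -io_le rmorph1 -normE; apply: ub; exists q.
have pS : rnorm (p.2 (S p.1)) = 1.
  apply/eqP; rewrite eq_le S_le1 //=.
  apply: (@le_of_le_add_small _ _ _ 2); first exact: ler0n.
  move=> d d0; have [k kd hk] := cS d d0 (Num.truncn d^-1).
  have hk' y : rnorm (T k y - S y) <= d * rnorm y by rewrite -rnormN opprB hk.
  have h2 := Pi_approx pP hk'.
  have hinv := invSn_le d0 kd.
  have := pT k; rewrite normE -(rmorph1 io) -rmorphB io_lt ltrBlDr => h1.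
  apply: ltW (lt_le_trans h1 _).
  by rewrite mulr_natr mulr2n addrA; exact: lerD.
split; last by rewrite normE pS rmorph1.
split; first by move=> _ [q hq <-]; rewrite normE -(rmorph1 io) io_le; exact: S_le1.
move=> e e0; exists `|p.2 (S p.1)|; first by exists p.
by rewrite normE pS rmorph1 gtrBl.
Qed.

End NumericalRadius.

Section FiniteDimensional.
Variables (X : normedModType K) (m : nat) (f : 'I_m -> X) (b : R)
  (crd : X -> 'I_m -> R).
Hypotheses (b_gt0 : 0 < b) (crdK : forall x, x = rcomb f (crd x))
  (crd_bound : forall x i, `|crd x i| <= b * rnorm x).

Let C := \sum_(i < m) rnorm (f i).

Lemma C_ge0 : 0 <= C. Proof. by apply: sumr_ge0 => i _; exact: rnorm_ge0. Qed.

Lemma linear_fun_bound (W : normedModType K) (T : X -> W) : linear_fun T ->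
  forall x, rnorm (T x) <= (b * \sum_(j < m) rnorm (T (f j))) * rnorm x.
Proof.
move=> hT x; rewrite {1}[x]crdK linear_fun_rcomb //.
apply: le_trans (rnorm_sum _ _) _.
rewrite mulrC mulrA mulr_sumr; apply: ler_sum => j _; rewrite rnormZ nrm_io.
by apply: ler_wpM2r; [exact: rnorm_ge0|]; rewrite mulrC crd_bound.
Qed.

Definition mxop (M : 'I_m -> 'I_m -> R) (y : X) : X :=
  \sum_(j < m) io (crd y j) *: rcomb f (fun i => M i j).

Lemma mxopB M M' y : mxop M y - mxop M' y = mxop (fun i j => M i j - M' i j) y.
Proof.
by rewrite /mxop -sumrB; apply: eq_bigr => j _; rewrite -scalerBr rcombB.
Qed.

Lemma mxop_bound M d y : 0 <= d -> (forall i j, `|M i j| <= d) ->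
  rnorm (mxop M y) <= (b * C * m%:R) * d * rnorm y.
Proof.
move=> d0 hM; apply: le_trans (rnorm_sum _ _) _.
apply: le_trans (_ : \sum_(j < m) (b * rnorm y) * (d * C) <= _).
  apply: ler_sum => j _; rewrite rnormZ nrm_io.
  apply: ler_pM => //; first exact: rnorm_ge0.
  apply: le_trans (rnorm_rcomb _ _) _; rewrite /C mulr_sumr; apply: ler_sum => i _.
  by apply: ler_wpM2r; [exact: rnorm_ge0 | exact: hM].
rewrite sumr_const card_ord -mulr_natr.
by rewrite le_eqVlt; apply/orP; left; apply/eqP; ring.
Qed.

Lemma linear_fun_mxop (T : X -> X) : linear_fun T ->
  forall y, T y = mxop (fun i j => crd (T (f j)) i) y.
Proof.
move=> hT y; rewrite {1}[y]crdK linear_fun_rcomb //; apply: eq_bigr => j _.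
by rewrite -crdK.
Qed.

(* n(X) > 0 bounds all operators of numerical radius 1 uniformly:
   ||T|| <= v(T) / n(X). *)
Lemma numrad1_bound : numindex_pos X -> exists2 B, 0 <= B &
  forall T : X -> X, bounded_linear T -> numrad_is T 1 ->
    forall x, rnorm (T x) <= B * rnorm x.
Proof.
move=> [c c0 hc]; exists (nrm c)^-1; first by rewrite invr_ge0 ltW ?nrm_gt0.
move=> T [lT _] nT x.
have B_ge0 : 0 <= b * \sum_(j < m) rnorm (T (f j)).
  by apply: mulr_ge0; [exact: ltW | apply: sumr_ge0 => j _; exact: rnorm_ge0].
have [s _ os] := opnorm_exists B_ge0 (linear_fun_bound lT).
have Tle y : rnorm (T y) <= s * rnorm y.
  by have := opnorm_le lT os y; rewrite !normE -rmorphM io_le.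
have s_gt0 := numrad1_opnorm_pos nT Tle.
have sV_gt0 : 0 < s^-1 by rewrite invr_gt0.
pose T' y := io s^-1 *: T y.
have lT' : linear_fun T' by move=> a u v; rewrite /T' lT scalerDr !scalerA mulrC.
have oT' : opnorm_is T' 1.
  by have := opnorm_scale sV_gt0 os; rewrite -rmorphM mulVf ?gt_eqF // rmorph1.
have nT' : numrad_is T' (io s^-1) by rewrite -[io s^-1]mulr1; exact: numrad_scale.
have bT' : bounded_linear T' by split=> //; exists 1; exact: opnorm_le lT' oT'.
have cs : nrm c <= s^-1 by rewrite -io_le -io_nrm_pos //; exact: hc bT' oT' nT'.
apply: le_trans (Tle x) _; apply: ler_wpM2r; first exact: rnorm_ge0.
by rewrite -[s]invrK lef_pV2 ?posrE ?invr_gt0 ?nrm_gt0.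
Qed.

(* A uniformly bounded sequence of linear operators on X has a bounded linear
   cluster point: the coefficient matrices range in a compact box of R^(m*m). *)
Lemma operator_cluster (T : nat -> X -> X) B : 0 <= B ->
  (forall k, linear_fun (T k)) -> (forall k x, rnorm (T k x) <= B * rnorm x) ->
  exists2 S : X -> X, bounded_linear S & op_cluster T S.
Proof.
move=> B0 lT bT; pose Q := b * B * C; pose G := b * C * m%:R.
have G_ge0 : 0 <= G by rewrite /G !mulr_ge0 ?C_ge0 ?ler0n // ltW.
pose w k : 'rV[R]_(m * m) := mxvec (\matrix_(i, j) crd (T k (f j)) i).
have wE k i j : w k ord0 (mxvec_index i j) = crd (T k (f j)) i.
  by rewrite /w -[ord0]/(0 : 'I_1) mxvecE mxE.
pose box := [set v : 'rV[R]_(m * m) |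
  forall i, (`[(- Q), Q]%classic : set R) (v ord0 i)]%classic.
have box_compact : compact box.
  by apply: (@rV_compact _ _ (fun=> `[(- Q), Q]%classic)) => _; exact: segment_compact.
have w_box k : box (w k).
  move=> i; case/mxvec_indexP: i => i j; rewrite wE.
  rewrite /= in_itv /= -ler_norml; apply: le_trans (crd_bound _ _) _.
  rewrite /Q -mulrA ler_pM2l //; apply: le_trans (bT _ _) _.
  apply: ler_wpM2l => //; rewrite /C (bigD1 j) //= lerDl.
  by apply: sumr_ge0 => i' _; exact: rnorm_ge0.
have [winf close] := compact_seq_cluster box_compact w_box.
pose S := mxop (fun i j => winf ord0 (mxvec_index i j)).
have cS : op_cluster T S.
  move=> d d0 n0; have dG : 0 < d / (G + 1) by rewrite divr_gt0 // ltr_wpDl.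
  have [k kn0 hk] := close _ dG n0; exists k => // y.
  have entries i j :
      `|winf ord0 (mxvec_index i j) - crd (T k (f j)) i| <= d / (G + 1).
    rewrite -wE (_ : _ - _ = (winf - w k) ord0 (mxvec_index i j)); last by rewrite !mxE.
    by rewrite distrC in hk; apply: le_trans (ltW hk); exact: rV_entry_le.
  have := mxop_bound (M := fun i j => winf ord0 (mxvec_index i j) - crd (T k (f j)) i)
    y (ltW dG) entries.
  rewrite -mxopB -(linear_fun_mxop (lT k)) => ST; apply: le_trans ST _.
  rewrite ler_wpM2r ?rnorm_ge0 // mulrCA ger_pMr // ler_pdivrMr ?ltr_wpDl //.
  by rewrite mul1r lerDl.
exists S => //; split; first exact: op_cluster_linear lT cS.
exists (io (G * `|winf|)) => y; rewrite !normE -rmorphM io_le.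
by apply: mxop_bound; [exact: normr_ge0 | move=> i j; exact: rV_entry_le].
Qed.

Theorem Lpp_nu_of_coordinates : numindex_pos X -> Lpp_nu X.
Proof.
move=> nX eps eps0 p pP; have [B B0 hB] := numrad1_bound nX.
apply: contrapT => no_eta.
pose good T := exists S : X -> X, [/\ bounded_linear S, numrad_is S 1,
  `|p.2 (S p.1)| = 1 & exists2 s : K, opnorm_is (fun x => S x - T x) s & s < eps].
have /choice[T hT] : forall k : nat, exists T : X -> X, [/\ bounded_linear T,
    numrad_is T 1, 1 - io (k.+1%:R^-1) < `|p.2 (T p.1)| & ~ good T].
  move=> k; apply: contrapT => all_good; apply: no_eta.
  exists (io (k.+1%:R^-1)); first by rewrite io_gt0 invr_gt0 ltr0Sn.
  move=> T' bT nT pT; apply: contrapT => nS; apply: all_good.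
  by exists T'; split.
have bT k : bounded_linear (T k) by case: (hT k).
have lT k : linear_fun (T k) by case: (bT k).
have nT k : numrad_is (T k) 1 by case: (hT k).
have pT k : 1 - io (k.+1%:R^-1) < `|p.2 (T k p.1)| by case: (hT k).
have [S bS cS] := operator_cluster B0 lT (fun k => hB _ (bT k) (nT k)).
have [nS pS] := op_cluster_numrad1 pP nT pT cS.
have d_gt0 : 0 < nrm eps / 2 by rewrite divr_gt0 ?nrm_gt0 ?ltr0n.
have [k _ hk] := cS _ d_gt0 0%N.
have [s s_le os] := opnorm_exists (ltW d_gt0) hk.
case: (hT k) => _ _ _; apply; exists S; split => //; exists (io s) => //.
rewrite (io_nrm_pos eps0) io_lt; apply: le_lt_trans s_le _.
by rewrite ltr_pdivrMr // ltr_pMr ?nrm_gt0 // ltr1n.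
Qed.

End FiniteDimensional.

Lemma Lpp_nu_of_real_span (X : normedModType K) m (f : 'I_m -> X) :
  (forall x, exists c, x = rcomb f c) -> numindex_pos X -> Lpp_nu X.
Proof.
move=> span; have [b [crd [b_gt0 crdK] crd_bound]] := bounded_coordinates span.
exact: Lpp_nu_of_coordinates b_gt0 crdK crd_bound.
Qed.

End RealScalars.

Lemma complex_normE (R : realType) (k : R[i]) : ((complex.Re `|k|)%:C)%C = `|k|.
Proof.
by rewrite [in RHS](complexE `|k|) ger0_Im ?normr_ge0 // mulr0 addr0.
Qed.

Lemma complex_real_span (R : realType) (X : normedModType R[i]) n (e : 'I_n -> X) :
  (forall x, exists c, x = \sum_(i < n) c i *: e i) ->
  forall x, exists c, x = rcomb (real_complex R)
    (fun k : 'I_(n + n) => match fintype.split k with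
      | inl i => e i | inr i => 'i%C *: e i end) c.
Proof.
move=> span x; have [c ->] := span x.
exists (fun k => match fintype.split k with
  | inl i => complex.Re (c i) | inr i => complex.Im (c i) end).
rewrite /rcomb big_split_ord /= -big_split /=; apply: eq_bigr => i _.
rewrite (unsplitK (inl _ i)) (unsplitK (inr _ i)) scalerA -scalerDl.
by rewrite mulrC -complexE.
Qed.

Theorem proposition3p3 (R : realType) :
  (forall X : completeNormedModType R,
     finite_dim X -> numindex_pos X -> Lpp_nu X) /\
  (forall X : completeNormedModType R[i],
     finite_dim X -> numindex_pos X -> Lpp_nu X).
Proof.
split => X [n [e span]].
  apply: (@Lpp_nu_of_real_span R R idfun (fun k => `|k|) (fun _ _ => erefl)
    (fun _ => erefl) X n e).
  by move=> x; have [c hc] := span x; exists c.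
exact: (@Lpp_nu_of_real_span R R[i] (real_complex R) (fun k => complex.Re `|k|)
  (@lecR R) (@complex_normE R) X _ _ (complex_real_span span)).
Qed.
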